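(* The set $\widetilde K_2=\{A\in GU_3(\mathbb{Z}_2): A_{11}\equiv A_{22}\equiv A_{33}\equiv 1\pmod{2+2i}\}$ is a group, and $GU_3(\mathbb{Z}_2)=\widetilde K_2\rtimes GU_3(\mathbb{Z})$.
   Context: $GU_3(R)=\{g\in GL_3(R[i]):gg^*=\lambda I,\ \lambda\in R^\times\}$ with $g^*$ the conjugate transpose ($i\mapsto -i$); here $R[i]=\mathbb{Z}_2[i]$ for $R=\mathbb{Z}_2$. $GU_3(\mathbb{Z})$ is the group of monomial matrices with nonzero entries in $\{\pm1,\pm i\}$. *)

From Stdlib Require Import ZArith.
Open Scope Z_scope.

Record Z2 := mkZ2 {
  z2seq : nat -> Z ;
  z2coh : forall n : nat, (2 ^ Z.of_nat n | z2seq (S n) - z2seq n) }.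

Definition Z2eq (x y : Z2) : Prop :=
  forall n : nat, (2 ^ Z.of_nat n | z2seq x n - z2seq y n).

Lemma Z2const_coh (c : Z) : forall n : nat, (2 ^ Z.of_nat n | c - c).
Proof. intros n. rewrite Z.sub_diag. apply Z.divide_0_r. Qed.

Definition Z2const (c : Z) : Z2 := mkZ2 (fun _ => c) (Z2const_coh c).
Definition Z2zero : Z2 := Z2const 0.
Definition Z2one : Z2 := Z2const 1.

Lemma Z2add_coh (x y : Z2) : forall n : nat,
  (2 ^ Z.of_nat n | (z2seq x (S n) + z2seq y (S n)) - (z2seq x n + z2seq y n)).
Proof.
intros n.
replace ((z2seq x (S n) + z2seq y (S n)) - (z2seq x n + z2seq y n))
  with ((z2seq x (S n) - z2seq x n) + (z2seq y (S n) - z2seq y n)) by ring.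
apply Z.divide_add_r; apply z2coh.
Qed.
Definition Z2add (x y : Z2) : Z2 :=
  mkZ2 (fun n => z2seq x n + z2seq y n) (Z2add_coh x y).

Lemma Z2opp_coh (x : Z2) : forall n : nat,
  (2 ^ Z.of_nat n | (- z2seq x (S n)) - (- z2seq x n)).
Proof.
intros n.
replace ((- z2seq x (S n)) - (- z2seq x n))
  with (- (z2seq x (S n) - z2seq x n)) by ring.
apply Z.divide_opp_r; apply z2coh.
Qed.
Definition Z2opp (x : Z2) : Z2 := mkZ2 (fun n => - z2seq x n) (Z2opp_coh x).

Lemma Z2mul_coh (x y : Z2) : forall n : nat,
  (2 ^ Z.of_nat n | (z2seq x (S n) * z2seq y (S n)) - (z2seq x n * z2seq y n)).
Proof.
intros n.
replace ((z2seq x (S n) * z2seq y (S n)) - (z2seq x n * z2seq y n))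
  with (z2seq x (S n) * (z2seq y (S n) - z2seq y n)
        + (z2seq x (S n) - z2seq x n) * z2seq y n) by ring.
apply Z.divide_add_r.
- apply Z.divide_mul_r; apply z2coh.
- apply Z.divide_mul_l; apply z2coh.
Qed.
Definition Z2mul (x y : Z2) : Z2 :=
  mkZ2 (fun n => z2seq x n * z2seq y n) (Z2mul_coh x y).

Definition Z2unit (x : Z2) : Prop := exists y : Z2, Z2eq (Z2mul x y) Z2one.

Record Z2i := mkZ2i { re : Z2 ; im : Z2 }.

Definition Z2ieq (a b : Z2i) : Prop := Z2eq (re a) (re b) /\ Z2eq (im a) (im b).
Definition Zi (x y : Z) : Z2i := mkZ2i (Z2const x) (Z2const y).
Definition ofZ2 (x : Z2) : Z2i := mkZ2i x Z2zero.
Definition Z2izero : Z2i := Zi 0 0.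
Definition Z2ione : Z2i := Zi 1 0.
Definition Z2iadd (a b : Z2i) : Z2i := mkZ2i (Z2add (re a) (re b)) (Z2add (im a) (im b)).
Definition Z2iopp (a : Z2i) : Z2i := mkZ2i (Z2opp (re a)) (Z2opp (im a)).
Definition Z2isub (a b : Z2i) : Z2i := Z2iadd a (Z2iopp b).
Definition Z2imul (a b : Z2i) : Z2i :=
  mkZ2i (Z2add (Z2mul (re a) (re b)) (Z2opp (Z2mul (im a) (im b))))
        (Z2add (Z2mul (re a) (im b)) (Z2mul (im a) (re b))).
Definition Z2iconj (a : Z2i) : Z2i := mkZ2i (re a) (Z2opp (im a)).

Definition Z2icong (a b d : Z2i) : Prop :=
  exists c : Z2i, Z2ieq (Z2isub a b) (Z2imul d c).

Inductive idx : Type := i1 | i2 | i3.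

Definition M3 : Type := idx -> idx -> Z2i.

Definition meq (A B : M3) : Prop := forall i j, Z2ieq (A i j) (B i j).
Definition mmul (A B : M3) : M3 := fun i j =>
  Z2iadd (Z2imul (A i i1) (B i1 j))
         (Z2iadd (Z2imul (A i i2) (B i2 j)) (Z2imul (A i i3) (B i3 j))).
Definition idx_eqb (i j : idx) : bool :=
  match i, j with i1, i1 | i2, i2 | i3, i3 => true | _, _ => false end.
Definition mscalar (a : Z2i) : M3 := fun i j => if idx_eqb i j then a else Z2izero.
Definition mI : M3 := mscalar Z2ione.
Definition mstar (A : M3) : M3 := fun i j => Z2iconj (A j i).

Definition GL3 (g : M3) : Prop :=
  exists h : M3, meq (mmul g h) mI /\ meq (mmul h g) mI.

Definition GU3 (g : M3) : Prop :=
  GL3 g /\ exists lam : Z2, Z2unit lam /\ meq (mmul g (mstar g)) (mscalar (ofZ2 lam)).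

(* GU_3(Z), viewed inside GU_3(Z_2): monomial matrices whose nonzero
   entries lie in {1, -1, i, -i} *)
Definition unit4 (a : Z2i) : Prop :=
  Z2ieq a (Zi 1 0) \/ Z2ieq a (Zi (-1) 0) \/ Z2ieq a (Zi 0 1) \/ Z2ieq a (Zi 0 (-1)).

Definition GU3Z (A : M3) : Prop :=
  exists sigma : idx -> idx,
    (forall i j, sigma i = sigma j -> i = j) /\
    (forall i j, (j = sigma i -> unit4 (A i j)) /\
                 (j <> sigma i -> Z2ieq (A i j) Z2izero)).

Definition Ktilde2 (A : M3) : Prop :=
  GU3 A /\ forall i : idx, Z2icong (A i i) Z2ione (Zi 2 2).

From Stdlib Require Import ZArith Lia List Bool Setoid Morphisms.
Import ListNotations.
Open Scope Z_scope.

(* Reduction mod 4 is a ring morphism [red4] : Z_2[i] -> Z/4[i], and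
   a = 1 (mod 2+2i) iff red4 a is 1 or 3+2i ([cong_one_iff_res1]).  Since
   g g^* = lambda I with lambda odd, every g in GU_3(Z_2) is a permutation
   matrix mod 1+i ([perm_mod_1i]).  For A in K~_2 the permutation is trivial,
   and the residues of A A^* = lambda I force lambda = 1 mod 4 and all
   off-diagonal entries to lie in (1+i), either all or none in (2)
   ([residue_shape]); this shape is stable under products and inverses, so
   K~_2 is a group.
   Each g factors as k m with m monomial, built from the permutation of g
   mod 1+i and suitable units ([GU3_decomp]); normality follows since
   conjugation by monomial matrices preserves K~_2, and K~_2 ∩ GU_3(Z) = 1
   because 1 is the only unit among ±1, ±i that is 1 mod (2+2i). *)

Lemma Z2eq_seq x y : (forall n, z2seq x n = z2seq y n) -> Z2eq x y.
Proof. intros H n. rewrite H, Z.sub_diag. apply Z.divide_0_r. Qed.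

#[global] Instance Z2eq_Equiv : Equivalence Z2eq.
Proof.
  split.
  - intros x. apply Z2eq_seq; auto.
  - intros x y H n.
    replace (z2seq y n - z2seq x n) with (-(z2seq x n - z2seq y n)) by ring.
    apply Z.divide_opp_r, H.
  - intros x y z H1 H2 n.
    replace (z2seq x n - z2seq z n)
      with ((z2seq x n - z2seq y n) + (z2seq y n - z2seq z n)) by ring.
    apply Z.divide_add_r; auto.
Qed.

#[global] Instance Z2add_Proper : Proper (Z2eq ==> Z2eq ==> Z2eq) Z2add.
Proof.
  intros a a' H1 b b' H2 n; simpl.
  replace (z2seq a n + z2seq b n - (z2seq a' n + z2seq b' n)) with
    ((z2seq a n - z2seq a' n) + (z2seq b n - z2seq b' n)) by ring.
  apply Z.divide_add_r; auto.
Qed.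

#[global] Instance Z2mul_Proper : Proper (Z2eq ==> Z2eq ==> Z2eq) Z2mul.
Proof.
  intros a a' H1 b b' H2 n; simpl.
  replace (z2seq a n * z2seq b n - z2seq a' n * z2seq b' n) with
    (z2seq a n * (z2seq b n - z2seq b' n) + (z2seq a n - z2seq a' n) * z2seq b' n)
    by ring.
  apply Z.divide_add_r; [apply Z.divide_mul_r | apply Z.divide_mul_l]; auto.
Qed.

#[global] Instance Z2opp_Proper : Proper (Z2eq ==> Z2eq) Z2opp.
Proof.
  intros a a' H n; simpl.
  replace (- z2seq a n - - z2seq a' n) with (-(z2seq a n - z2seq a' n)) by ring.
  apply Z.divide_opp_r; auto.
Qed.

#[global] Instance Z2ieq_Equiv : Equivalence Z2ieq.
Proof.
  split.
  - intros x; split; reflexivity.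
  - intros x y [H1 H2]; split; symmetry; auto.
  - intros x y z [H1 H2] [H3 H4]; split; etransitivity; eauto.
Qed.

#[global] Instance Z2iadd_Proper : Proper (Z2ieq ==> Z2ieq ==> Z2ieq) Z2iadd.
Proof. intros a a' [] b b' []; split; simpl; apply Z2add_Proper; auto. Qed.

#[global] Instance Z2imul_Proper : Proper (Z2ieq ==> Z2ieq ==> Z2ieq) Z2imul.
Proof.
  intros a a' [H1 H2] b b' [H3 H4]; split; simpl;
    repeat first [apply Z2add_Proper | apply Z2mul_Proper | apply Z2opp_Proper]; auto.
Qed.

#[global] Instance Z2iopp_Proper : Proper (Z2ieq ==> Z2ieq) Z2iopp.
Proof. intros a a' []; split; simpl; apply Z2opp_Proper; auto. Qed.

#[global] Instance Z2iconj_Proper : Proper (Z2ieq ==> Z2ieq) Z2iconj.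
Proof. intros a a' []; split; simpl; [|apply Z2opp_Proper]; auto. Qed.

#[global] Instance ofZ2_Proper : Proper (Z2eq ==> Z2ieq) ofZ2.
Proof. intros x x' H; split; simpl; [exact H | reflexivity]. Qed.

(* Ring identities in Z_2 and Z_2[i]: all operations act termwise on the
   defining sequences, so an identity holds once it holds in Z at every level. *)
Ltac z2unfold := cbv beta iota delta [Z2add Z2mul Z2opp Z2const Z2zero Z2one z2seq
   Z2iadd Z2imul Z2iopp Z2isub Z2iconj Zi ofZ2 Z2izero Z2ione re im].
Ltac z2ring := first
  [ split; apply Z2eq_seq; intro; z2unfold; ring
  | apply Z2eq_seq; intro; z2unfold; ring ].

#[global] Instance meq_Equiv : Equivalence meq.
Proof.
  split.
  - intros A i j; reflexivity.
  - intros A B H i j; symmetry; auto.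
  - intros A B C H1 H2 i j; etransitivity; eauto.
Qed.

#[global] Instance mmul_Proper : Proper (meq ==> meq ==> meq) mmul.
Proof.
  intros A A' HA B B' HB i j; unfold mmul.
  rewrite (HA i i1), (HA i i2), (HA i i3), (HB i1 j), (HB i2 j), (HB i3 j).
  reflexivity.
Qed.

#[global] Instance mstar_Proper : Proper (meq ==> meq) mstar.
Proof. intros A A' HA i j; unfold mstar; rewrite (HA j i); reflexivity. Qed.

Lemma mmul_assoc A B C : meq (mmul (mmul A B) C) (mmul A (mmul B C)).
Proof. intros i j; unfold mmul; z2ring. Qed.

Lemma mmul_1_l A : meq (mmul mI A) A.
Proof. intros i j; unfold mmul, mI, mscalar; destruct i, j; simpl; z2ring. Qed.

Lemma mmul_1_r A : meq (mmul A mI) A.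
Proof. intros i j; unfold mmul, mI, mscalar; destruct i, j; simpl; z2ring. Qed.

Lemma mstar_mul A B : meq (mstar (mmul A B)) (mmul (mstar B) (mstar A)).
Proof. intros i j; unfold mmul, mstar; z2ring. Qed.

Lemma mstar_mstar A : meq (mstar (mstar A)) A.
Proof. intros i j; unfold mstar; z2ring. Qed.

Definition mscale (a : Z2i) (M : M3) : M3 := fun i j => Z2imul a (M i j).

#[global] Instance mscale_Proper : Proper (Z2ieq ==> meq ==> meq) mscale.
Proof. intros a a' Ha A A' HA i j; unfold mscale; rewrite Ha, (HA i j); reflexivity. Qed.

Lemma mscalar_l a A : meq (mmul (mscalar a) A) (mscale a A).
Proof. intros i j; unfold mmul, mscale, mscalar; destruct i, j; simpl; z2ring. Qed.

Lemma mscalar_r a A : meq (mmul A (mscalar a)) (mscale a A).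
Proof. intros i j; unfold mmul, mscale, mscalar; destruct i, j; simpl; z2ring. Qed.

Lemma mscale_mul_l a A B : meq (mmul (mscale a A) B) (mscale a (mmul A B)).
Proof. intros i j; unfold mmul, mscale; z2ring. Qed.

Lemma mscale_mul_r a A B : meq (mmul A (mscale a B)) (mscale a (mmul A B)).
Proof. intros i j; unfold mmul, mscale; z2ring. Qed.

Lemma mscale_mscale a b A : meq (mscale a (mscale b A)) (mscale (Z2imul a b) A).
Proof. intros i j; unfold mscale; z2ring. Qed.

Lemma mscale_scalar a b : meq (mscale a (mscalar b)) (mscalar (Z2imul a b)).
Proof. intros i j; unfold mscale, mscalar; destruct (idx_eqb i j); z2ring. Qed.

Lemma mstar_mscale a A : meq (mstar (mscale a A)) (mscale (Z2iconj a) (mstar A)).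
Proof. intros i j; unfold mscale, mstar; z2ring. Qed.

Lemma mscale_ofZ2_inv la u A :
  Z2eq (Z2mul u la) Z2one -> meq (mscale (ofZ2 u) (mscale (ofZ2 la) A)) A.
Proof.
  intros E. rewrite mscale_mscale. intros i j; unfold mscale.
  transitivity (Z2imul (ofZ2 (Z2mul u la)) (A i j)); [z2ring|].
  rewrite E. z2ring.
Qed.

Lemma Z2unit_mul x y : Z2unit x -> Z2unit y -> Z2unit (Z2mul x y).
Proof.
  intros [u Hu] [v Hv]. exists (Z2mul u v).
  transitivity (Z2mul (Z2mul x u) (Z2mul y v)); [z2ring|]. rewrite Hu, Hv; z2ring.
Qed.

Lemma GU3_meq A A' : meq A A' -> GU3 A -> GU3 A'.
Proof.
  intros E [[h [H1 H2]] [la [Hu H3]]]. split.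
  - exists h; rewrite <- E; auto.
  - exists la; split; auto. rewrite <- E; auto.
Qed.

Lemma GU3_mul A B : GU3 A -> GU3 B -> GU3 (mmul A B).
Proof.
  intros [[ha [Ha1 Ha2]] [la [Hla HA]]] [[hb [Hb1 Hb2]] [lb [Hlb HB]]]. split.
  - exists (mmul hb ha). split.
    + rewrite mmul_assoc, <- (mmul_assoc B hb ha), Hb1, mmul_1_l; auto.
    + rewrite mmul_assoc, <- (mmul_assoc ha A B), Ha2, mmul_1_l; auto.
  - exists (Z2mul la lb). split; [apply Z2unit_mul; auto|].
    rewrite mstar_mul, mmul_assoc, <- (mmul_assoc B), HB, mscalar_l, mscale_mul_r, HA,
      mscale_scalar.
    intros i j; unfold mscalar; destruct (idx_eqb i j); [z2ring | reflexivity].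
Qed.

Lemma GU3_adjoint A h la :
  meq (mmul h A) mI -> meq (mmul A (mstar A)) (mscalar (ofZ2 la)) ->
  meq (mstar A) (mscale (ofZ2 la) h).
Proof.
  intros H1 H2.
  rewrite <- (mmul_1_l (mstar A)), <- H1, mmul_assoc, H2, mscalar_r. reflexivity.
Qed.

Lemma GU3_inverse_form A h la u :
  meq (mmul h A) mI -> meq (mmul A (mstar A)) (mscalar (ofZ2 la)) ->
  Z2eq (Z2mul la u) Z2one -> meq h (mscale (ofZ2 u) (mstar A)).
Proof.
  intros H1 H2 Hu.
  rewrite (GU3_adjoint _ _ _ H1 H2), mscale_ofZ2_inv; [reflexivity|].
  rewrite <- Hu; z2ring.
Qed.

Lemma GU3_inv A h : GU3 A -> meq (mmul A h) mI -> meq (mmul h A) mI -> GU3 h.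
Proof.
  intros [_ [la [[u Hu] HA]]] H1 H2. split.
  - exists A; split; auto.
  - exists u; split. { exists la. rewrite <- Hu. z2ring. }
    rewrite (GU3_inverse_form _ _ _ _ H2 HA Hu), mstar_mscale, mstar_mstar,
      mscale_mul_l, mscale_mul_r, (GU3_adjoint _ _ _ H2 HA), mscale_mul_l, H2.
    intros i j; unfold mscale, mI, mscalar; destruct (idx_eqb i j); [|z2ring].
    transitivity (ofZ2 (Z2mul u (Z2mul la u))); [z2ring|]. rewrite Hu. z2ring.
Qed.

(* Z/4[i] as pairs (a, b) standing for a + b i, with coordinates reduced mod 4. *)
Definition n4 (x : Z) : Z := x mod 4.
Definition r4 : Type := (Z * Z)%type.
Definition radd (x y : r4) : r4 := (n4 (fst x + fst y), n4 (snd x + snd y)).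
Definition rmul (x y : r4) : r4 :=
  (n4 (fst x * fst y - snd x * snd y), n4 (fst x * snd y + snd x * fst y)).
Definition rconj (x : r4) : r4 := (fst x, n4 (- snd x)).

(* Reduction Z_2[i] -> Z/4[i]: the level-2 terms of the defining sequences. *)
Definition red4 (z : Z2i) : r4 := (n4 (z2seq (re z) 2), n4 (z2seq (im z) 2)).

Lemma n4_cong a b : (4 | a - b) -> n4 a = n4 b.
Proof.
  intros [k Hk]. unfold n4. replace a with (b + k * 4) by lia.
  apply Z_mod_plus_full.
Qed.

Lemma n4_div a : (4 | a - n4 a).
Proof. unfold n4. exists (a / 4). pose proof (Z.div_mod a 4). lia. Qed.

#[global] Instance red4_Proper : Proper (Z2ieq ==> eq) red4.
Proof.
  intros z w [H1 H2]. unfold red4. specialize (H1 2%nat). specialize (H2 2%nat).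
  change (2 ^ Z.of_nat 2) with 4 in H1, H2. f_equal; apply n4_cong; auto.
Qed.

Ltac div4 := repeat match goal with
  | |- (4 | ?a - n4 ?a) => apply n4_div
  | |- (4 | ?a + ?b) => apply Z.divide_add_r
  | |- (4 | - ?a) => apply Z.divide_opp_r
  | |- (4 | (?a - n4 ?a) * ?b) => apply Z.divide_mul_l
  | |- (4 | ?b * (?a - n4 ?a)) => apply Z.divide_mul_r
  end.

Lemma red4_add z w : red4 (Z2iadd z w) = radd (red4 z) (red4 w).
Proof.
  unfold red4, radd; cbn [fst snd re im Z2iadd Z2add z2seq]. f_equal; apply n4_cong;
  match goal with |- (4 | ?a + ?b - (n4 ?a + n4 ?b)) =>
    replace (a + b - (n4 a + n4 b)) with ((a - n4 a) + (b - n4 b)) by ring end; div4.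
Qed.

Lemma red4_mul z w : red4 (Z2imul z w) = rmul (red4 z) (red4 w).
Proof.
  unfold red4, rmul; cbn [fst snd re im Z2imul Z2add Z2mul Z2opp z2seq].
  f_equal; apply n4_cong.
  - match goal with |- (4 | ?a * ?b + - (?c * ?d) - (n4 ?a * n4 ?b - n4 ?c * n4 ?d)) =>
      replace (a * b + - (c * d) - (n4 a * n4 b - n4 c * n4 d)) with
        ((a - n4 a) * b + n4 a * (b - n4 b) + - ((c - n4 c) * d + n4 c * (d - n4 d)))
        by ring end; div4.
  - match goal with |- (4 | ?a * ?b + ?c * ?d - (n4 ?a * n4 ?b + n4 ?c * n4 ?d)) =>
      replace (a * b + c * d - (n4 a * n4 b + n4 c * n4 d)) with
        ((a - n4 a) * b + n4 a * (b - n4 b) + ((c - n4 c) * d + n4 c * (d - n4 d)))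
        by ring end; div4.
Qed.

Lemma red4_conj z : red4 (Z2iconj z) = rconj (red4 z).
Proof.
  unfold red4, rconj; cbn [fst snd re im Z2iconj Z2opp z2seq]. f_equal; apply n4_cong.
  match goal with |- (4 | - ?a - - n4 ?a) =>
    replace (- a - - n4 a) with (- (a - n4 a)) by ring end; div4.
Qed.

Definition r4_all : list r4 :=
  [(0,0);(0,1);(0,2);(0,3);(1,0);(1,1);(1,2);(1,3);
   (2,0);(2,1);(2,2);(2,3);(3,0);(3,1);(3,2);(3,3)].

Lemma n4_range a : n4 a = 0 \/ n4 a = 1 \/ n4 a = 2 \/ n4 a = 3.
Proof. unfold n4. pose proof (Z.mod_pos_bound a 4). lia. Qed.

Lemma n4_in a b : In (n4 a, n4 b) r4_all.
Proof.
  destruct (n4_range a) as [-> | [-> | [-> | ->]]];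
  destruct (n4_range b) as [-> | [-> | [-> | ->]]]; simpl; tauto.
Qed.

Lemma red4_in z : In (red4 z) r4_all.
Proof. apply n4_in. Qed.

Lemma radd_in x y : In (radd x y) r4_all.
Proof. apply n4_in. Qed.

Lemma rmul_in x y : In (rmul x y) r4_all.
Proof. apply n4_in. Qed.

Lemma rconj_in x : In x r4_all -> In (rconj x) r4_all.
Proof. intros H; simpl in H; repeat destruct H as [<- | H]; simpl; tauto. Qed.

Definition r4eqb (x y : r4) : bool := Z.eqb (fst x) (fst y) && Z.eqb (snd x) (snd y).

Lemma r4eqb_eq x y : r4eqb x y = true <-> x = y.
Proof.
  destruct x, y; unfold r4eqb; simpl. rewrite andb_true_iff, !Z.eqb_eq.
  split; [intros [-> ->]; auto | intros H; inversion H; auto].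
Qed.

Definition inb (x : r4) (l : list r4) : bool := existsb (r4eqb x) l.

Lemma inb_In x l : inb x l = true <-> In x l.
Proof.
  unfold inb; rewrite existsb_exists. split.
  - intros [y [Hy E]]. apply r4eqb_eq in E; subst; auto.
  - intros H; exists x; split; auto. apply r4eqb_eq; auto.
Qed.

Lemma forallb1_In (l : list r4) (P : r4 -> bool) :
  forallb P l = true -> forall x, In x l -> P x = true.
Proof. rewrite forallb_forall; auto. Qed.

Lemma forallb2_In l1 l2 (P : r4 -> r4 -> bool) :
  forallb (fun x => forallb (P x) l2) l1 = true ->
  forall x y, In x l1 -> In y l2 -> P x y = true.
Proof.
  rewrite forallb_forall; intros H x y Hx Hy. specialize (H x Hx).
  rewrite forallb_forall in H; auto.
Qed.

Lemma forallb3_In l1 l2 l3 (P : r4 -> r4 -> r4 -> bool) :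
  forallb (fun x => forallb (fun y => forallb (P x y) l3) l2) l1 = true ->
  forall x y z, In x l1 -> In y l2 -> In z l3 -> P x y z = true.
Proof.
  rewrite forallb_forall; intros H x y z Hx Hy Hz. specialize (H x Hx).
  rewrite forallb_forall in H; specialize (H y Hy). rewrite forallb_forall in H; auto.
Qed.

(* Distinguished subsets of Z/4[i]:
   - [res_one]: residues of the a with a = 1 (mod 2+2i), namely 1 and 3+2i;
   - [res_div1i]: residues of the multiples of 1+i;
   - [res_units]: residues of ±1, ±i;
   - [res_2p2i], [res_2p2i_shift]: residues of (2+2i)Z_2[i] and of 2 + (2+2i)Z_2[i]. *)
Definition res_one : list r4 := [(1,0);(3,2)].
Definition res_div1i : list r4 := [(0,0);(0,2);(2,0);(2,2);(1,1);(1,3);(3,1);(3,3)].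
Definition res_units : list r4 := [(1,0);(3,0);(0,1);(0,3)].
Definition res_2p2i : list r4 := [(0,0);(2,2)].
Definition res_2p2i_shift : list r4 := [(0,2);(2,0)].

(* [rodd x]: x is a unit modulo 1+i (a + b odd).  For x divisible by 1+i,
   [rodd_re x] tells whether x is NOT divisible by 2 (real part odd), and
   [rnorm_div1i] is the corresponding value of x x^* modulo 4. *)
Definition rodd (x : r4) : bool := Z.odd (fst x + snd x).
Definition rodd_re (x : r4) : bool := Z.odd (fst x).
Definition rnorm_div1i (e : bool) : r4 := if e then (2,0) else (0,0).

Lemma res_cong_one x c : In x r4_all -> In c r4_all ->
  radd x (3,0) = rmul (2,2) c -> In x res_one.
Proof.
  intros Hx Hc E.
  assert (H := forallb2_In r4_all r4_all (fun x c => implb (r4eqb (radd x (3,0)) (rmul (2,2) c))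
                                                 (inb x res_one))
                 ltac:(vm_compute; reflexivity) x c Hx Hc).
  cbv beta in H. rewrite (proj2 (r4eqb_eq _ _) E) in H. apply inb_In, H.
Qed.

Lemma rodd_morph x y : In x r4_all -> In y r4_all ->
  rodd (radd x y) = xorb (rodd x) (rodd y) /\ rodd (rmul x y) = rodd x && rodd y /\
  rodd (rconj x) = rodd x.
Proof.
  intros Hx Hy.
  assert (H := forallb2_In r4_all r4_all (fun x y =>
      Bool.eqb (rodd (radd x y)) (xorb (rodd x) (rodd y)) &&
      Bool.eqb (rodd (rmul x y)) (rodd x && rodd y) && Bool.eqb (rodd (rconj x)) (rodd x))
    ltac:(vm_compute; reflexivity) x y Hx Hy).
  cbv beta in H. rewrite !andb_true_iff in H.
  destruct H as [[H1 H2] H3]; apply Bool.eqb_prop in H1, H2, H3; auto.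
Qed.

Lemma rodd_add x y : In x r4_all -> In y r4_all -> rodd (radd x y) = xorb (rodd x) (rodd y).
Proof. intros Hx Hy; apply (rodd_morph x y Hx Hy). Qed.

Lemma rodd_mul x y : In x r4_all -> In y r4_all -> rodd (rmul x y) = rodd x && rodd y.
Proof. intros Hx Hy; apply (rodd_morph x y Hx Hy). Qed.

Lemma rodd_conj x : In x r4_all -> rodd (rconj x) = rodd x.
Proof. intros Hx; apply (rodd_morph x x Hx Hx). Qed.

Lemma res_div1i_of_even x : In x r4_all -> rodd x = false -> In x res_div1i.
Proof. intros H; simpl in H; repeat destruct H as [<- | H]; simpl; try tauto; discriminate. Qed.

Lemma res_one_odd x : In x res_one -> rodd x = true.
Proof. intros H; simpl in H; repeat destruct H as [<- | H]; simpl; auto; tauto. Qed.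

Lemma mul_one_div1i x a : In x res_one -> In a res_div1i ->
  (In (rmul x (rconj a)) res_div1i /\ rodd_re (rmul x (rconj a)) = rodd_re a) /\
  (In (rmul a (rconj x)) res_div1i /\ rodd_re (rmul a (rconj x)) = rodd_re a).
Proof.
  intros Hx Ha.
  assert (H := forallb2_In res_one res_div1i (fun x a =>
      inb (rmul x (rconj a)) res_div1i && Bool.eqb (rodd_re (rmul x (rconj a))) (rodd_re a) &&
      inb (rmul a (rconj x)) res_div1i && Bool.eqb (rodd_re (rmul a (rconj x))) (rodd_re a))
    ltac:(vm_compute; reflexivity) x a Hx Ha).
  cbv beta in H. rewrite !andb_true_iff, !inb_In in H.
  destruct H as [[[H1 H2] H3] H4]; apply Bool.eqb_prop in H2, H4; auto.
Qed.

Lemma mul_div1i_div1i a b : In a res_div1i -> In b res_div1i ->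
  In (rmul a (rconj b)) res_div1i /\ rodd_re (rmul a (rconj b)) = false.
Proof.
  intros Ha Hb.
  assert (H := forallb2_In res_div1i res_div1i (fun a b =>
      inb (rmul a (rconj b)) res_div1i && negb (rodd_re (rmul a (rconj b))))
    ltac:(vm_compute; reflexivity) a b Ha Hb).
  cbv beta in H. rewrite andb_true_iff, inb_In in H.
  destruct H as [H1 H2]; apply negb_true_iff in H2; auto.
Qed.

(* On (1+i)/(2), which has two elements, addition is exclusive or. *)
Lemma rodd_re_add3 u v w : In u res_div1i -> In v res_div1i -> In w res_div1i ->
  rodd_re (radd u (radd v w)) = xorb (rodd_re u) (xorb (rodd_re v) (rodd_re w)).
Proof.
  intros Hu Hv Hw.
  assert (H := forallb3_In res_div1i res_div1i res_div1i (fun u v w =>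
      Bool.eqb (rodd_re (radd u (radd v w))) (xorb (rodd_re u) (xorb (rodd_re v) (rodd_re w))))
    ltac:(vm_compute; reflexivity) u v w Hu Hv Hw).
  apply Bool.eqb_prop, H.
Qed.

Lemma norm_res_one x : In x res_one -> rmul x (rconj x) = (1,0).
Proof. intros H; simpl in H; repeat destruct H as [<- | H]; try reflexivity; tauto. Qed.

Lemma norm_res_div1i a : In a res_div1i -> rmul a (rconj a) = rnorm_div1i (rodd_re a).
Proof. intros H; simpl in H; repeat destruct H as [<- | H]; try reflexivity; tauto. Qed.

(* Products and sums governing the diagonal of a product of two matrices of K~_2. *)
Lemma res_one_mul x y : In x res_one -> In y res_one -> In (rmul x y) res_one.
Proof.
  intros H H'; simpl in H, H'; repeat destruct H as [<- | H]; repeat destruct H' as [<- | H'];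
  simpl; tauto.
Qed.

Lemma mul_div1i_class a b : In a res_div1i -> In b res_div1i ->
  In (rmul a b) (if rodd_re a && rodd_re b then res_2p2i_shift else res_2p2i).
Proof.
  intros Ha Hb. apply inb_In.
  exact (forallb2_In res_div1i res_div1i (fun a b =>
      inb (rmul a b) (if rodd_re a && rodd_re b then res_2p2i_shift else res_2p2i))
    ltac:(vm_compute; reflexivity) a b Ha Hb).
Qed.

Lemma res_one_add_class x y z (C : list r4) :
  In x res_one -> (C = res_2p2i \/ C = res_2p2i_shift) -> In y C -> In z C ->
  In (radd x (radd y z)) res_one /\ In (radd y (radd x z)) res_one /\
  In (radd y (radd z x)) res_one.
Proof.
  intros Hx HC Hy Hz.
  destruct HC; subst C; simpl in Hx, Hy, Hz;
  repeat destruct Hx as [<- | Hx]; repeat destruct Hy as [<- | Hy];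
  repeat destruct Hz as [<- | Hz]; simpl; tauto.
Qed.

Lemma res_one_conj_unit u x : In u res_units -> In x res_one ->
  In (rmul (rmul u x) (rconj u)) res_one.
Proof.
  intros H H'; simpl in H, H'; repeat destruct H as [<- | H]; repeat destruct H' as [<- | H'];
  simpl; tauto.
Qed.

Lemma res_one_rconj x : In x res_one -> In (rmul (1,0) (rconj x)) res_one.
Proof. intros H; simpl in H; repeat destruct H as [<- | H]; simpl; tauto. Qed.

Lemma res_real_unit x y : In x r4_all -> In y r4_all ->
  rmul x y = (1,0) -> snd x = 0 -> snd y = 0 ->
  Z.odd (fst x) = true /\ (fst x = 1 -> fst y = 1).
Proof.
  intros Hx Hy E Ex Ey.
  assert (H := forallb2_In r4_all r4_all (fun x y =>
      implb (r4eqb (rmul x y) (1,0) && Z.eqb (snd x) 0 && Z.eqb (snd y) 0)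
        (Z.odd (fst x) && implb (Z.eqb (fst x) 1) (Z.eqb (fst y) 1)))
    ltac:(vm_compute; reflexivity) x y Hx Hy).
  cbv beta in H. rewrite (proj2 (r4eqb_eq _ _) E), Ex, Ey in H. simpl in H.
  apply andb_true_iff in H as [H1 H2]. split; auto.
  intros E1. rewrite E1 in H2. apply Z.eqb_eq, H2.
Qed.

Lemma idx_eqb_eq i j : idx_eqb i j = true <-> i = j.
Proof. destruct i, j; simpl; split; congruence. Qed.

Lemma idx_eqb_refl i : idx_eqb i i = true.
Proof. destruct i; reflexivity. Qed.

Lemma idx_eqb_neq i j : i <> j -> idx_eqb i j = false.
Proof. intros H. destruct (idx_eqb i j) eqn:E; auto. apply idx_eqb_eq in E; contradiction. Qed.

(* A 3x3 matrix over F_2 with orthonormal rows is a permutation matrix: row i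
   has its single 1 in column [first_true] of the row, and these columns are
   distinct.  [dot3] is the F_2 inner product of two rows. *)
Definition first_true (b1 b2 b3 : bool) : idx := if b1 then i1 else if b2 then i2 else i3.
Definition dot3 (a1 a2 a3 b1 b2 b3 : bool) : bool := xorb (a1 && b1) (xorb (a2 && b2) (a3 && b3)).

Lemma orthonormal_F2_perm_table : forall b11 b12 b13 b21 b22 b23 b31 b32 b33 : bool,
  implb (dot3 b11 b12 b13 b11 b12 b13 && dot3 b21 b22 b23 b21 b22 b23
         && dot3 b31 b32 b33 b31 b32 b33
         && negb (dot3 b11 b12 b13 b21 b22 b23) && negb (dot3 b11 b12 b13 b31 b32 b33)
         && negb (dot3 b21 b22 b23 b31 b32 b33))
  (Bool.eqb b11 (idx_eqb (first_true b11 b12 b13) i1)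
   && Bool.eqb b12 (idx_eqb (first_true b11 b12 b13) i2)
   && Bool.eqb b13 (idx_eqb (first_true b11 b12 b13) i3)
   && Bool.eqb b21 (idx_eqb (first_true b21 b22 b23) i1)
   && Bool.eqb b22 (idx_eqb (first_true b21 b22 b23) i2)
   && Bool.eqb b23 (idx_eqb (first_true b21 b22 b23) i3)
   && Bool.eqb b31 (idx_eqb (first_true b31 b32 b33) i1)
   && Bool.eqb b32 (idx_eqb (first_true b31 b32 b33) i2)
   && Bool.eqb b33 (idx_eqb (first_true b31 b32 b33) i3)
   && negb (idx_eqb (first_true b11 b12 b13) (first_true b21 b22 b23))
   && negb (idx_eqb (first_true b11 b12 b13) (first_true b31 b32 b33))
   && negb (idx_eqb (first_true b21 b22 b23) (first_true b31 b32 b33))) = true.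
Proof. intros [] [] [] [] [] [] [] [] []; reflexivity. Qed.

Lemma orthonormal_F2_perm (e : idx -> idx -> bool) :
  (forall i j, dot3 (e i i1) (e i i2) (e i i3) (e j i1) (e j i2) (e j i3) = idx_eqb i j) ->
  exists s : idx -> idx, (forall i j, s i = s j -> i = j) /\
                         (forall i j, e i j = idx_eqb (s i) j).
Proof.
  intros H.
  pose proof (orthonormal_F2_perm_table (e i1 i1) (e i1 i2) (e i1 i3) (e i2 i1) (e i2 i2)
                (e i2 i3) (e i3 i1) (e i3 i2) (e i3 i3)) as P.
  rewrite (H i1 i1), (H i2 i2), (H i3 i3), (H i1 i2), (H i1 i3), (H i2 i3) in P.
  cbn [implb idx_eqb negb andb] in P. rewrite !andb_true_iff in P.
  destruct P as [[[[[[[[[[[P11 P12] P13] P21] P22] P23] P31] P32] P33] Q12] Q13] Q23].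
  apply Bool.eqb_prop in P11, P12, P13, P21, P22, P23, P31, P32, P33.
  apply negb_true_iff in Q12, Q13, Q23.
  exists (fun i => first_true (e i i1) (e i i2) (e i i3)). split.
  - intros [] [] E; auto; rewrite E, idx_eqb_refl in *; discriminate.
  - intros [] []; auto.
Qed.

Definition rgram (M : idx -> idx -> r4) (i j : idx) : r4 :=
  radd (rmul (M i i1) (rconj (M j i1)))
   (radd (rmul (M i i2) (rconj (M j i2))) (rmul (M i i3) (rconj (M j i3)))).
Definition rmmul (M N : idx -> idx -> r4) (i j : idx) : r4 :=
  radd (rmul (M i i1) (N i1 j)) (radd (rmul (M i i2) (N i2 j)) (rmul (M i i3) (N i3 j))).

Lemma rodd_rgram M i j : (forall i j, In (M i j) r4_all) ->
  rodd (rgram M i j) = dot3 (rodd (M i i1)) (rodd (M i i2)) (rodd (M i i3))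
                            (rodd (M j i1)) (rodd (M j i2)) (rodd (M j i3)).
Proof.
  intros HM. unfold rgram, dot3.
  rewrite !rodd_add, !rodd_mul, !rodd_conj; auto using radd_in, rmul_in, rconj_in.
Qed.

Lemma perm_mod_1i (M : idx -> idx -> r4) (l : Z) :
  (forall i j, In (M i j) r4_all) -> Z.odd l = true ->
  (forall i j, rgram M i j = if idx_eqb i j then (l,0) else (0,0)) ->
  exists s : idx -> idx, (forall i j, s i = s j -> i = j) /\
     (forall i j, rodd (M i j) = idx_eqb (s i) j).
Proof.
  intros HM Hl HR. apply (orthonormal_F2_perm (fun i j => rodd (M i j))).
  intros i j. rewrite <- rodd_rgram by auto. rewrite HR.
  destruct (idx_eqb i j); unfold rodd; simpl; auto. rewrite Z.add_0_r; auto.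
Qed.

(* In a sum over c of three terms, only the terms c = i and c = j may be
   nonzero; if the sum vanishes, these two terms agree. *)
Lemma xor3_two_terms i j a b : i <> j ->
  xorb (if idx_eqb i1 i then a else if idx_eqb i1 j then b else false)
   (xorb (if idx_eqb i2 i then a else if idx_eqb i2 j then b else false)
         (if idx_eqb i3 i then a else if idx_eqb i3 j then b else false)) = false ->
  a = b.
Proof. destruct i, j, a, b; simpl; intros; congruence. Qed.

(* Throughout, M stands for the residue matrix of an element of K~_2: its
   diagonal entries are 1 or 3+2i and M M^* = l I with l odd. *)
Section ResidueShape.

Variable M : idx -> idx -> r4.
Variable l : Z.
Hypothesis M_in : forall i j, In (M i j) r4_all.
Hypothesis M_diag : forall i, In (M i i) res_one.
Hypothesis l_odd : Z.odd l = true.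
Hypothesis M_gram : forall i j, rgram M i j = if idx_eqb i j then (l,0) else (0,0).

(* The permutation modulo 1+i is the identity: off-diagonal entries lie in (1+i). *)
Lemma offdiag_div1i i j : i <> j -> In (M i j) res_div1i.
Proof.
  intros Hij. destruct (perm_mod_1i M l M_in l_odd M_gram) as [s [_ Hs]].
  assert (Hid : s i = i).
  { pose proof (Hs i i) as E. rewrite (res_one_odd _ (M_diag i)) in E.
    symmetry in E; apply idx_eqb_eq in E; auto. }
  apply res_div1i_of_even; auto. rewrite Hs, Hid. apply idx_eqb_neq; auto.
Qed.

Lemma gram_term_parity i j c : i <> j ->
  In (rmul (M i c) (rconj (M j c))) res_div1i /\
  rodd_re (rmul (M i c) (rconj (M j c))) =
    if idx_eqb c i then rodd_re (M j i) else if idx_eqb c j then rodd_re (M i j) else false.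
Proof.
  intros Hij. destruct (idx_eqb c i) eqn:Ei; [apply idx_eqb_eq in Ei; subst c|].
  - apply (mul_one_div1i _ _ (M_diag i) (offdiag_div1i j i (not_eq_sym Hij))).
  - destruct (idx_eqb c j) eqn:Ej; [apply idx_eqb_eq in Ej; subst c|].
    + apply (mul_one_div1i _ _ (M_diag j) (offdiag_div1i i j Hij)).
    + apply mul_div1i_div1i; apply offdiag_div1i; intros E; subst c;
        rewrite idx_eqb_refl in *; discriminate.
Qed.

(* Orthogonality of rows i and j forces M i j and M j i to be divisible by 2
   simultaneously. *)
Lemma offdiag_sym i j : i <> j -> rodd_re (M j i) = rodd_re (M i j).
Proof.
  intros Hij.
  assert (Hz : rgram M i j = (0,0)) by (rewrite M_gram, idx_eqb_neq; auto).
  destruct (gram_term_parity i j i1 Hij) as [T1 P1].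
  destruct (gram_term_parity i j i2 Hij) as [T2 P2].
  destruct (gram_term_parity i j i3 Hij) as [T3 P3].
  pose proof (rodd_re_add3 _ _ _ T1 T2 T3) as S.
  unfold rgram in Hz. rewrite Hz, P1, P2, P3 in S.
  apply (xor3_two_terms i j); auto.
Qed.

(* Comparing the three norms  1 + |M i j|^2 + |M i k|^2 = l  gives l = 1 and a
   common 2-divisibility class for all off-diagonal entries. *)
Lemma residue_shape :
  l = 1 /\ exists t, forall i j, i <> j -> In (M i j) res_div1i /\ rodd_re (M i j) = t.
Proof.
  pose proof (offdiag_div1i i1 i2 ltac:(discriminate)) as P12.
  pose proof (offdiag_div1i i1 i3 ltac:(discriminate)) as P13.
  pose proof (offdiag_div1i i2 i1 ltac:(discriminate)) as P21.
  pose proof (offdiag_div1i i2 i3 ltac:(discriminate)) as P23.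
  pose proof (offdiag_div1i i3 i1 ltac:(discriminate)) as P31.
  pose proof (offdiag_div1i i3 i2 ltac:(discriminate)) as P32.
  pose proof (M_gram i1 i1) as N1. pose proof (M_gram i2 i2) as N2.
  pose proof (M_gram i3 i3) as N3. simpl in N1, N2, N3. unfold rgram in N1, N2, N3.
  rewrite (norm_res_one _ (M_diag i1)), (norm_res_div1i _ P12), (norm_res_div1i _ P13) in N1.
  rewrite (norm_res_one _ (M_diag i2)), (norm_res_div1i _ P21), (norm_res_div1i _ P23) in N2.
  rewrite (norm_res_one _ (M_diag i3)), (norm_res_div1i _ P31), (norm_res_div1i _ P32) in N3.
  rewrite (offdiag_sym i1 i2 ltac:(discriminate)) in N2.
  rewrite (offdiag_sym i1 i3 ltac:(discriminate)),
    (offdiag_sym i2 i3 ltac:(discriminate)) in N3.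
  assert (T : l = 1 /\ rodd_re (M i1 i3) = rodd_re (M i1 i2) /\
              rodd_re (M i2 i3) = rodd_re (M i1 i2)).
  { destruct (rodd_re (M i1 i2)), (rodd_re (M i1 i3)), (rodd_re (M i2 i3));
      vm_compute in N1, N2, N3; inversion N1; inversion N2; inversion N3; subst;
      try lia; auto. }
  destruct T as [Tl [T13 T23]]. split; auto. exists (rodd_re (M i1 i2)).
  intros [] [] Hij; try (exfalso; apply Hij; reflexivity); split; auto;
    rewrite ?(offdiag_sym i1 i2), ?(offdiag_sym i1 i3), ?(offdiag_sym i2 i3) by discriminate;
    congruence.
Qed.

End ResidueShape.

(* The diagonal of a product of two matrices of this residue shape is again
   = 1 mod (2+2i): the off-diagonal products all land in the same class. *)
Lemma res_one_diag_mul (M N : idx -> idx -> r4) (tM tN : bool) :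
  (forall i, In (M i i) res_one) -> (forall i, In (N i i) res_one) ->
  (forall i j, i <> j -> In (M i j) res_div1i /\ rodd_re (M i j) = tM) ->
  (forall i j, i <> j -> In (N i j) res_div1i /\ rodd_re (N i j) = tN) ->
  forall i, In (rmmul M N i i) res_one.
Proof.
  intros DM DN OM ON.
  set (C := if tM && tN then res_2p2i_shift else res_2p2i).
  assert (HC : C = res_2p2i \/ C = res_2p2i_shift) by (unfold C; destruct (tM && tN); auto).
  assert (K : forall a b c d, a <> b -> c <> d -> In (rmul (M a b) (N c d)) C).
  { intros a b c d H1 H2. destruct (OM a b H1) as [A1 A2], (ON c d H2) as [B1 B2].
    unfold C; rewrite <- A2, <- B2. apply mul_div1i_class; auto. }
  intros i; unfold rmmul; destruct i;
    apply (res_one_add_class _ _ _ _ (res_one_mul _ _ (DM _) (DN _)) HC);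
    apply K; discriminate.
Qed.

Lemma pow2_add n k : 2 ^ Z.of_nat (n + k) = 2 ^ Z.of_nat n * 2 ^ Z.of_nat k.
Proof. rewrite Nat2Z.inj_add, Z.pow_add_r; lia. Qed.

Lemma z2coh_le (x : Z2) k n : (2 ^ Z.of_nat n | z2seq x (n + k) - z2seq x n).
Proof.
  induction k.
  - rewrite Nat.add_0_r, Z.sub_diag. apply Z.divide_0_r.
  - replace (z2seq x (n + S k) - z2seq x n) with
      ((z2seq x (S (n + k)) - z2seq x (n + k)) + (z2seq x (n + k) - z2seq x n))
      by (rewrite <- plus_n_Sm; ring).
    apply Z.divide_add_r; auto.
    eapply Z.divide_trans; [|apply z2coh]. rewrite pow2_add. apply Z.divide_factor_l.
Qed.

(* A 2-adic integer whose residue mod 4 vanishes is divisible by 4 in Z_2: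
   the quotient is the sequence n |-> x_(n+2) / 4. *)
Lemma Z2_div4 (x : Z2) : (4 | z2seq x 2) -> exists y, Z2eq x (Z2mul (Z2const 4) y).
Proof.
  intros H4.
  assert (Hd : forall n, (4 | z2seq x (n + 2))).
  { intros n. replace (z2seq x (n + 2)) with ((z2seq x (2 + n) - z2seq x 2) + z2seq x 2)
      by (rewrite Nat.add_comm; ring).
    apply Z.divide_add_r; auto. apply (z2coh_le x n 2%nat). }
  assert (He : forall n, z2seq x (n + 2) = 4 * (z2seq x (n + 2) / 4)).
  { intros n. destruct (Hd n) as [q Hq]. rewrite Hq, Z.div_mul by lia. ring. }
  unshelve eexists (mkZ2 (fun n => z2seq x (n + 2) / 4) _).
  - intros n. cbv beta. apply (Z.mul_divide_cancel_l _ _ 4); [lia|].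
    rewrite Z.mul_sub_distr_l, <- (He (S n)), <- (He n).
    replace (4 * 2 ^ Z.of_nat n) with (2 ^ Z.of_nat (n + 2))
      by (rewrite pow2_add; change (2 ^ Z.of_nat 2) with 4; ring).
    replace (S n + 2)%nat with (S (n + 2)) by lia.
    apply z2coh.
  - intros n; cbn [z2seq Z2mul Z2const]. rewrite <- He.
    replace (z2seq x n - z2seq x (n + 2)) with (- (z2seq x (n + 2) - z2seq x n)) by ring.
    apply Z.divide_opp_r. apply z2coh_le.
Qed.

Lemma Z2_cancel2 (x y : Z2) : Z2eq (Z2mul (Z2const 2) x) (Z2mul (Z2const 2) y) -> Z2eq x y.
Proof.
  intros H n. specialize (H (S n)). cbn [z2seq Z2mul Z2const] in H.
  replace (2 * z2seq x (S n) - 2 * z2seq y (S n))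
    with (2 * (z2seq x (S n) - z2seq y (S n))) in H by ring.
  replace (2 ^ Z.of_nat (S n)) with (2 * 2 ^ Z.of_nat n) in H
    by (rewrite Nat2Z.inj_succ, Z.pow_succ_r; lia).
  apply Z.mul_divide_cancel_l in H; [|lia].
  replace (z2seq x n - z2seq y n) with ((z2seq x (S n) - z2seq y (S n))
     - (z2seq x (S n) - z2seq x n) + (z2seq y (S n) - z2seq y n)) by ring.
  apply Z.divide_add_r; [apply Z.divide_sub_r|]; auto using z2coh.
Qed.

Lemma Z2_cancel4 (x y : Z2) : Z2eq (Z2mul (Z2const 4) x) (Z2mul (Z2const 4) y) -> Z2eq x y.
Proof.
  intros H. apply Z2_cancel2, Z2_cancel2.
  transitivity (Z2mul (Z2const 4) x); [z2ring|]. rewrite H; z2ring.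
Qed.

Lemma res_one_sums r s : (r mod 4 = 1 /\ s mod 4 = 0) \/ (r mod 4 = 3 /\ s mod 4 = 2) ->
  (4 | (r + - 1) + (s + - 0)) /\ (4 | (s + - 0) + - (r + - 1)).
Proof.
  pose proof (Z.div_mod r 4 ltac:(lia)). pose proof (Z.div_mod s 4 ltac:(lia)).
  intros [[Hr Hs] | [Hr Hs]]; rewrite Hr, Hs in *.
  - split; [exists (r / 4 + s / 4) | exists (s / 4 - r / 4)]; lia.
  - split; [exists (r / 4 + s / 4 + 1) | exists (s / 4 - r / 4)]; lia.
Qed.

(* Conversely, if
   a - 1 = p + q i with p + q = 4 y1 and q - p = 4 y2, then
   a - 1 = (2+2i)(y1 + y2 i), as one checks after multiplying by 4. *)
Lemma cong_one_iff_res1 z : Z2icong z Z2ione (Zi 2 2) <-> In (red4 z) res_one.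
Proof.
  split.
  - intros [c Hc]. apply red4_Proper in Hc. unfold Z2isub in Hc.
    rewrite red4_add, red4_mul in Hc. apply (res_cong_one _ (red4 c)); auto using red4_in.
  - intros HD.
    assert (Hr : (z2seq (re z) 2 mod 4 = 1 /\ z2seq (im z) 2 mod 4 = 0) \/
                 (z2seq (re z) 2 mod 4 = 3 /\ z2seq (im z) 2 mod 4 = 2)).
    { unfold red4, n4 in HD; simpl in HD. destruct HD as [HD|[HD|[]]]; inversion HD; auto. }
    destruct (res_one_sums _ _ Hr) as [Hsum Hdiff].
    set (p := Z2add (re z) (Z2opp Z2one)). set (q := Z2add (im z) (Z2opp Z2zero)).
    destruct (Z2_div4 (Z2add p q) Hsum) as [y1 H1].
    destruct (Z2_div4 (Z2add q (Z2opp p)) Hdiff) as [y2 H2].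
    exists (mkZ2i y1 y2). split; simpl; apply Z2_cancel4.
    + transitivity (Z2add (Z2mul (Z2const 2) (Z2add p q))
                          (Z2opp (Z2mul (Z2const 2) (Z2add q (Z2opp p)))));
        [unfold p, q; z2ring|]. rewrite H1, H2. z2ring.
    + transitivity (Z2add (Z2mul (Z2const 2) (Z2add p q)) (Z2mul (Z2const 2) (Z2add q (Z2opp p))));
        [unfold p, q; z2ring|]. rewrite H1, H2. z2ring.
Qed.

Definition red4M (A : M3) : idx -> idx -> r4 := fun i j => red4 (A i j).

Lemma red4M_in A : forall i j, In (red4M A i j) r4_all.
Proof. intros; apply red4_in. Qed.

Lemma red4_mmul A B i j : red4 (mmul A B i j) = rmmul (red4M A) (red4M B) i j.
Proof. unfold mmul, rmmul, red4M. rewrite !red4_add, !red4_mul. reflexivity. Qed.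

Lemma red4_gram A i j : red4 (mmul A (mstar A) i j) = rgram (red4M A) i j.
Proof. unfold mmul, mstar, rgram, red4M. rewrite !red4_add, !red4_mul, !red4_conj. reflexivity. Qed.

Lemma GU3_gram_res A la : meq (mmul A (mstar A)) (mscalar (ofZ2 la)) ->
  forall i j, rgram (red4M A) i j = if idx_eqb i j then (n4 (z2seq la 2), 0) else (0,0).
Proof.
  intros H i j. rewrite <- red4_gram, (H i j). unfold mscalar.
  destruct (idx_eqb i j); reflexivity.
Qed.

Lemma Z2_unit_res la u : Z2eq (Z2mul la u) Z2one ->
  Z.odd (n4 (z2seq la 2)) = true /\ (n4 (z2seq la 2) = 1 -> n4 (z2seq u 2) = 1).
Proof.
  intros H.
  assert (E : rmul (n4 (z2seq la 2), 0) (n4 (z2seq u 2), 0) = (1,0)).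
  { change (rmul (red4 (ofZ2 la)) (red4 (ofZ2 u)) = red4 (ofZ2 Z2one)).
    rewrite <- red4_mul, <- H. apply red4_Proper. z2ring. }
  exact (res_real_unit _ _ (n4_in _ 0) (n4_in _ 0) E eq_refl eq_refl).
Qed.

Lemma Ktilde2_diag A : Ktilde2 A -> forall i, In (red4M A i i) res_one.
Proof. intros [_ HD] i. apply cong_one_iff_res1, HD. Qed.

Lemma Ktilde2_shape A la : Ktilde2 A -> Z2unit la ->
  meq (mmul A (mstar A)) (mscalar (ofZ2 la)) ->
  n4 (z2seq la 2) = 1 /\
  exists t, forall i j, i <> j -> In (red4M A i j) res_div1i /\ rodd_re (red4M A i j) = t.
Proof.
  intros HA [u Hu] Hla.
  exact (residue_shape (red4M A) _ (red4M_in A) (Ktilde2_diag A HA)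
           (proj1 (Z2_unit_res _ _ Hu)) (GU3_gram_res _ _ Hla)).
Qed.

Lemma Ktilde2_offdiag A : Ktilde2 A ->
  exists t, forall i j, i <> j -> In (red4M A i j) res_div1i /\ rodd_re (red4M A i j) = t.
Proof.
  intros HA. pose proof HA as [[_ [la [Hu Hla]]] _].
  exact (proj2 (Ktilde2_shape A la HA Hu Hla)).
Qed.

Lemma Ktilde2_meq A A' : meq A A' -> Ktilde2 A -> Ktilde2 A'.
Proof.
  intros E [HG HD]. split; [eapply GU3_meq; eauto|].
  intros i. apply cong_one_iff_res1. rewrite <- (E i i). apply cong_one_iff_res1; auto.
Qed.

Lemma Ktilde2_mul A B : Ktilde2 A -> Ktilde2 B -> Ktilde2 (mmul A B).
Proof.
  intros HA HB. split; [apply GU3_mul; [apply HA | apply HB]|].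
  destruct (Ktilde2_offdiag A HA) as [tA OA], (Ktilde2_offdiag B HB) as [tB OB].
  intros i; apply cong_one_iff_res1. rewrite red4_mmul.
  exact (res_one_diag_mul _ _ _ _ (Ktilde2_diag A HA) (Ktilde2_diag B HB) OA OB i).
Qed.

(* The inverse of A in K~_2 is u A^* with u = lambda^-1 = 1 mod 4, and the
   conjugate of a diagonal entry = 1 mod (2+2i) is again = 1 mod (2+2i). *)
Lemma Ktilde2_inv A : Ktilde2 A ->
  exists B, Ktilde2 B /\ meq (mmul A B) mI /\ meq (mmul B A) mI.
Proof.
  intros HK. pose proof HK as [[[h [H1 H2]] [la [[u Hu] HA]]] _].
  exists h. split; [|auto]. split.
  - eapply GU3_inv; [apply HK | eauto | eauto].
  - assert (Hl1 : n4 (z2seq la 2) = 1)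
      by (apply (Ktilde2_shape A la HK); [exists u |]; auto).
    pose proof (proj2 (Z2_unit_res _ _ Hu) Hl1) as Hu1.
    intros i. apply cong_one_iff_res1. rewrite (GU3_inverse_form _ _ _ _ H2 HA Hu i i).
    unfold mscale, mstar. rewrite red4_mul, red4_conj.
    change (red4 (ofZ2 u)) with (n4 (z2seq u 2), 0). rewrite Hu1.
    apply res_one_rconj, (Ktilde2_diag A HK).
Qed.

Lemma Ktilde2_I : Ktilde2 mI.
Proof.
  split.
  - split; [exists mI; split; apply mmul_1_l|].
    exists Z2one. split; [exists Z2one; z2ring|].
    intros i j; unfold mmul, mstar, mI, mscalar; destruct i, j; simpl; z2ring.
  - intros i. apply cong_one_iff_res1. unfold red4, mI, mscalar.
    rewrite idx_eqb_refl. simpl; auto.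
Qed.

Ltac unit4_tac := unfold unit4; first
  [ left; z2ring | right; left; z2ring | right; right; left; z2ring
  | right; right; right; z2ring ].

#[global] Instance unit4_Proper : Proper (Z2ieq ==> iff) unit4.
Proof. intros a b E; unfold unit4; rewrite E; reflexivity. Qed.

Lemma unit4_mul a b : unit4 a -> unit4 b -> unit4 (Z2imul a b).
Proof.
  intros [Ha|[Ha|[Ha|Ha]]] [Hb|[Hb|[Hb|Hb]]]; rewrite Ha, Hb; unit4_tac.
Qed.

Lemma unit4_conj a : unit4 a -> unit4 (Z2iconj a).
Proof. intros [Ha|[Ha|[Ha|Ha]]]; rewrite Ha; unit4_tac. Qed.

Lemma unit4_norm a : unit4 a -> Z2ieq (Z2imul a (Z2iconj a)) Z2ione.
Proof. intros [Ha|[Ha|[Ha|Ha]]]; rewrite Ha; z2ring. Qed.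

Lemma unit4_red4 a : unit4 a -> In (red4 a) res_units.
Proof. intros [Ha|[Ha|[Ha|Ha]]]; rewrite Ha; simpl; tauto. Qed.

Lemma mmul_row_single A B i c j : (forall k, k <> c -> Z2ieq (A i k) Z2izero) ->
  Z2ieq (mmul A B i j) (Z2imul (A i c) (B c j)).
Proof.
  intros H. unfold mmul. destruct c;
  repeat match goal with |- context [A i ?k] =>
    match k with c => fail 1 | _ => rewrite (H k ltac:(discriminate)) end end; z2ring.
Qed.

Lemma mmul_col_single A B i c j : (forall k, k <> c -> Z2ieq (B k j) Z2izero) ->
  Z2ieq (mmul A B i j) (Z2imul (A i c) (B c j)).
Proof.
  intros H. unfold mmul. destruct c;
  repeat match goal with |- context [B ?k j] =>
    match k with c => fail 1 | _ => rewrite (H k ltac:(discriminate)) end end; z2ring.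
Qed.

Lemma idx_inj_inv (s : idx -> idx) : (forall i j, s i = s j -> i = j) ->
  exists t : idx -> idx, (forall j, s (t j) = j) /\ (forall i, t (s i) = i).
Proof.
  intros Hs.
  exists (fun j => if idx_eqb (s i1) j then i1 else if idx_eqb (s i2) j then i2 else i3).
  assert (N12 : s i1 <> s i2) by (intros E; apply Hs in E; discriminate).
  assert (N13 : s i1 <> s i3) by (intros E; apply Hs in E; discriminate).
  assert (N23 : s i2 <> s i3) by (intros E; apply Hs in E; discriminate).
  destruct (s i1) eqn:E1, (s i2) eqn:E2, (s i3) eqn:E3; try congruence;
  split; intros []; simpl; rewrite ?E1, ?E2, ?E3; reflexivity.
Qed.

Lemma GU3Z_star A : GU3Z A -> GU3Z (mstar A).
Proof.
  intros [s [Hs H]]. destruct (idx_inj_inv s Hs) as [t [Ht1 Ht2]].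
  exists t. split.
  - intros i j E. rewrite <- (Ht1 i), <- (Ht1 j), E. reflexivity.
  - intros i j; split; intros E; unfold mstar.
    + subst j. apply unit4_conj. apply (H (t i) i). rewrite Ht1; auto.
    + assert (Z : Z2ieq (A j i) Z2izero).
      { apply (H j i). intros E'. apply E. rewrite E', Ht2. reflexivity. }
      rewrite Z. z2ring.
Qed.

Lemma GU3Z_unitary A : GU3Z A -> meq (mmul A (mstar A)) mI.
Proof.
  intros [s [Hs H]] i j.
  rewrite (mmul_row_single A (mstar A) i (s i) j) by (intros k Hk; apply (H i k); auto).
  unfold mstar, mI, mscalar. destruct (idx_eqb i j) eqn:E.
  - apply idx_eqb_eq in E; subst j. apply unit4_norm. apply (H i (s i)); auto.
  - assert (Z : Z2ieq (A j (s i)) Z2izero).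
    { apply (H j (s i)). intros E'. apply Hs in E'. subst j.
      rewrite idx_eqb_refl in E; discriminate. }
    rewrite Z. z2ring.
Qed.

Lemma GU3Z_unitary_l A : GU3Z A -> meq (mmul (mstar A) A) mI.
Proof. intros H. rewrite <- (mstar_mstar A) at 2. apply GU3Z_unitary, GU3Z_star; auto. Qed.

Lemma GU3Z_GU3 A : GU3Z A -> GU3 A.
Proof.
  intros H. split.
  - exists (mstar A); split; [apply GU3Z_unitary | apply GU3Z_unitary_l]; auto.
  - exists Z2one. split; [exists Z2one; z2ring|]. apply GU3Z_unitary; auto.
Qed.

Lemma GU3Z_I : GU3Z mI.
Proof.
  exists (fun i => i). split; auto. intros i j; split; intros E; unfold mI, mscalar.
  - subst j. rewrite idx_eqb_refl. unit4_tac.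
  - rewrite idx_eqb_neq by auto. reflexivity.
Qed.

Lemma GU3Z_mul A B : GU3Z A -> GU3Z B -> GU3Z (mmul A B).
Proof.
  intros [s [Hs HA]] [t [Ht HB]]. exists (fun i => t (s i)). split; auto.
  intros i j.
  rewrite (mmul_row_single A B i (s i) j) by (intros k Hk; apply (HA i k); auto).
  split; intros E.
  - subst j. apply unit4_mul; [apply (HA i (s i)) | apply (HB (s i) (t (s i)))]; auto.
  - rewrite (proj2 (HB (s i) j) E). z2ring.
Qed.

Lemma GU3Z_inv A : GU3Z A -> exists B, GU3Z B /\ meq (mmul A B) mI /\ meq (mmul B A) mI.
Proof.
  intros H. exists (mstar A). split; [apply GU3Z_star; auto|].
  split; [apply GU3Z_unitary | apply GU3Z_unitary_l]; auto.
Qed.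

(* The unit of {±1, ±i} attached to a residue w that is odd mod 1+i: the one
   with w u^* = 1 mod (2+2i). *)
Definition unit_part (w : r4) : Z * Z :=
  if inb w [(1,0);(3,2)] then (1,0) else if inb w [(3,0);(1,2)] then (-1,0)
  else if inb w [(0,1);(2,3)] then (0,1) else (0,-1).

Lemma unit_part_unit4 w : unit4 (Zi (fst (unit_part w)) (snd (unit_part w))).
Proof.
  unfold unit_part.
  destruct (inb w _); [cbn [fst snd]; unit4_tac|].
  destruct (inb w _); [cbn [fst snd]; unit4_tac|].
  destruct (inb w _); cbn [fst snd]; unit4_tac.
Qed.

Lemma unit_part_spec w : In w r4_all -> rodd w = true ->
  In (rmul w (rconj (red4 (Zi (fst (unit_part w)) (snd (unit_part w)))))) res_one.
Proof.
  intros Hw Hp. apply inb_In.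
  pose proof (forallb1_In r4_all (fun w => implb (rodd w)
     (inb (rmul w (rconj (red4 (Zi (fst (unit_part w)) (snd (unit_part w)))))) res_one))
     ltac:(vm_compute; reflexivity) w Hw) as H.
  cbv beta in H. rewrite Hp in H. exact H.
Qed.

(* Every g in GU_3(Z_2) factors as g = k m with k in K~_2 and m monomial:
   m has the permutation s of g mod (1+i) and the units [unit_part] of the
   entries g_(i, s i), so that k = g m^* has diagonal = 1 mod (2+2i). *)
Lemma GU3_decomp g : GU3 g -> exists k m, Ktilde2 k /\ GU3Z m /\ meq g (mmul k m).
Proof.
  intros HG. pose proof HG as [_ [la [[u Hu] HA]]].
  destruct (perm_mod_1i (red4M g) _ (red4M_in g) (proj1 (Z2_unit_res _ _ Hu))
              (GU3_gram_res _ _ HA)) as [s [Hs Hp]].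
  set (c := fun i => unit_part (red4M g i (s i))).
  set (m := fun i j => if idx_eqb (s i) j then Zi (fst (c i)) (snd (c i)) else Z2izero).
  assert (Hm : GU3Z m).
  { exists s; split; auto. intros i j; split; intros E; unfold m.
    - subst j; rewrite idx_eqb_refl; apply unit_part_unit4.
    - rewrite idx_eqb_neq by auto. reflexivity. }
  exists (mmul g (mstar m)), m. split; [|split; auto].
  - split.
    + apply GU3_mul; auto. apply GU3Z_GU3, GU3Z_star; auto.
    + intros i. apply cong_one_iff_res1.
      rewrite (mmul_col_single g (mstar m) i (s i) i).
      2: { intros k Hk. unfold mstar, m. rewrite idx_eqb_neq by auto. z2ring. }
      unfold mstar, m. rewrite idx_eqb_refl, red4_mul, red4_conj.
      apply unit_part_spec; [apply red4_in|].
      pose proof (Hp i (s i)) as P. rewrite idx_eqb_refl in P. exact P.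
  - rewrite mmul_assoc, GU3Z_unitary_l, mmul_1_r by auto. reflexivity.
Qed.

(* K~_2 is stable under conjugation by monomial matrices: the diagonal entry
   (i, i) of m A m^* is u A_(s i, s i) u^* for a unit u. *)
Lemma Ktilde2_conj_GU3Z A m : Ktilde2 A -> GU3Z m -> Ktilde2 (mmul (mmul m A) (mstar m)).
Proof.
  intros HA Hm. split.
  - apply GU3_mul; [apply GU3_mul; [apply GU3Z_GU3; auto | apply HA]|].
    apply GU3Z_GU3, GU3Z_star; auto.
  - destruct Hm as [s [Hs Hms]]. intros i; apply cong_one_iff_res1.
    rewrite (mmul_col_single (mmul m A) (mstar m) i (s i) i).
    2: { intros k Hk. unfold mstar. rewrite (proj2 (Hms i k) Hk). z2ring. }
    rewrite (mmul_row_single m A i (s i) (s i))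
      by (intros k Hk; apply (proj2 (Hms i k)); auto).
    unfold mstar. rewrite !red4_mul, red4_conj. apply res_one_conj_unit.
    + apply unit4_red4. apply (proj1 (Hms i (s i))); auto.
    + apply (Ktilde2_diag A HA).
Qed.

(* Normality: writing g = k m, we get g A g^-1 = k (m A m^* ) k^-1. *)
Lemma Ktilde2_normal g h A : GU3 g -> meq (mmul g h) mI -> meq (mmul h g) mI ->
  Ktilde2 A -> Ktilde2 (mmul (mmul g A) h).
Proof.
  intros HG H1 H2 HA.
  destruct (GU3_decomp g HG) as [k [m [Hk [Hm Hg]]]].
  destruct (Ktilde2_inv k Hk) as [k' [Hk' [Hkk' Hk'k]]].
  assert (Hh : meq h (mmul (mstar m) k')).
  { transitivity (mmul h (mmul g (mmul (mstar m) k'))).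
    - rewrite Hg, (mmul_assoc k m), <- (mmul_assoc m (mstar m) k'), GU3Z_unitary by auto.
      rewrite mmul_1_l, Hkk', mmul_1_r. reflexivity.
    - rewrite <- mmul_assoc, H2, mmul_1_l. reflexivity. }
  apply (Ktilde2_meq (mmul k (mmul (mmul (mmul m A) (mstar m)) k'))).
  { rewrite Hg, Hh, !mmul_assoc. reflexivity. }
  apply Ktilde2_mul; auto. apply Ktilde2_mul; auto. apply Ktilde2_conj_GU3Z; auto.
Qed.

(* K~_2 ∩ GU_3(Z) = 1: a monomial matrix with diagonal = 1 mod (2+2i) has
   nonzero diagonal, hence is diagonal, and 1 is the only unit of {±1, ±i}
   that is = 1 mod (2+2i). *)
Lemma Ktilde2_GU3Z_trivial A : Ktilde2 A -> GU3Z A -> meq A mI.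
Proof.
  intros HK [s [Hs HA]]. pose proof (Ktilde2_diag A HK) as DA.
  assert (Hid : forall i, s i = i).
  { intros i. destruct (idx_eqb (s i) i) eqn:E; [apply idx_eqb_eq; auto|].
    exfalso. assert (Z : Z2ieq (A i i) Z2izero).
    { apply (HA i i). intros E'. rewrite <- E', idx_eqb_refl in E. discriminate. }
    pose proof (DA i) as D. unfold red4M in D. rewrite Z in D. simpl in D.
    intuition discriminate. }
  intros i j. unfold mI, mscalar. destruct (idx_eqb i j) eqn:E.
  - apply idx_eqb_eq in E; subst j.
    assert (U : unit4 (A i i)) by (apply (HA i i); rewrite Hid; auto).
    pose proof (DA i) as D. unfold red4M in D.
    destruct U as [U|[U|[U|U]]]; rewrite U in D; rewrite U; try reflexivity;
      vm_compute in D; intuition discriminate.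
  - apply (HA i j). rewrite Hid. intros E'; subst j; rewrite idx_eqb_refl in E; discriminate.
Qed.

Theorem proposition5p5 :
  (* K~_2 is a group (a subgroup of GU_3(Z_2)) *)
  (Ktilde2 mI /\
   (forall A B, Ktilde2 A -> Ktilde2 B -> Ktilde2 (mmul A B)) /\
   (forall A, Ktilde2 A ->
      exists B, Ktilde2 B /\ meq (mmul A B) mI /\ meq (mmul B A) mI)) /\
  (* K~_2 is normal in GU_3(Z_2) *)
  (forall g h A, GU3 g -> meq (mmul g h) mI -> meq (mmul h g) mI ->
      Ktilde2 A -> Ktilde2 (mmul (mmul g A) h)) /\
  (* GU_3(Z) is a subgroup of GU_3(Z_2) *)
  (GU3Z mI /\
   (forall A, GU3Z A -> GU3 A) /\
   (forall A B, GU3Z A -> GU3Z B -> GU3Z (mmul A B)) /\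
   (forall A, GU3Z A ->
      exists B, GU3Z B /\ meq (mmul A B) mI /\ meq (mmul B A) mI)) /\
  (* trivial intersection *)
  (forall A, Ktilde2 A -> GU3Z A -> meq A mI) /\
  (* GU_3(Z_2) = K~_2 * GU_3(Z) *)
  (forall g, GU3 g -> exists k h, Ktilde2 k /\ GU3Z h /\ meq g (mmul k h)).
Proof.
  split; [exact (conj Ktilde2_I (conj Ktilde2_mul Ktilde2_inv))|].
  split; [exact Ktilde2_normal|].
  split; [exact (conj GU3Z_I (conj GU3Z_GU3 (conj GU3Z_mul GU3Z_inv)))|].
  exact (conj Ktilde2_GU3Z_trivial GU3_decomp).
Qed.
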